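(* Consider $p\ge 1$ machines, machine $v$ having nonnegative real parameters $k^A_v,k^B_v,t^A_v,t^B_v$, and a real bound $L$. For $1\le v\le p$ and an integer $a\ge 0$, let $b_v(a)=\{b\in\mathbb{Z}_{\ge 0} : f_v(a,b)\le L\}$ and $$dp(v,a)=\bigcup_{\substack{x_1+\dots+x_v=a\\ x_1,\dots,x_v\in\mathbb{Z}_{\ge 0}}}\big(b_1(x_1)+\dots+b_v(x_v)\big),$$ where $+$ denotes the sumset $X+Y=\{x+y : x\in X, y\in Y\}$. Then for every $1\le v\le p$ and every integer $a\ge 0$, the set $dp(v,a)$ is an interval of integers, i.e. if $c_1<c_2<c_3$ are integers with $c_1,c_3\in dp(v,a)$ then $c_2\in dp(v,a)$.
   Context: Each machine $v$ processes jobs of two types, A and B, in batches. A schedule of machine $v$ for the task-combination $(a,b)$ is a finite sequence of batches, each a nonempty group of jobs of a single type, with consecutive batches of different types, processing exactly $a$ A-jobs and $b$ B-jobs. An A-batch of $x$ jobs takes $t^A_v+k^A_v x^2$ time units and a B-batch of $x$ jobs takes $t^B_v+k^B_v x^2$ time units on machine $v$; the time of a schedule is the sum of its batch times (empty schedule: time $0$). $f_v(a,b)$ is the minimum time over all schedules of machine $v$ for $(a,b)$. Thus $dp(v,a)$ is the set of $b$ such that machines $1,\dots,v$ together can process $a$ A-jobs and $b$ B-jobs with each machine finishing within $L$ time units. *)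

From HB Require Import structures.
From mathcomp Require Import all_boot all_order all_algebra.
From mathcomp Require Import boolp classical_sets reals.
Set Implicit Arguments. Unset Strict Implicit. Unset Printing Implicit Defensive.
Import Order.TTheory GRing.Theory Num.Theory.
Local Open Scope ring_scope.
Local Open Scope classical_set_scope.

Record machine (R : realType) := Machine {
  kA : R; kB : R; tA : R; tB : R }.

(* A batch is (type, size); type true = A, false = B. *)
Definition batch := (bool * nat)%type.

Definition is_schedule (a b : nat) (s : seq batch) : bool :=
  [&& all (fun x : batch => 0 < x.2)%N s,
      sorted (fun x y : batch => x.1 != y.1) s,
      sumn [seq x.2 | x <- s & x.1] == a
    & sumn [seq x.2 | x <- s & ~~ x.1] == b].

Definition batch_time (R : realType) (m : machine R) (x : batch) : R :=
  if x.1 then tA m + kA m * (x.2%:R) ^+ 2 else tB m + kB m * (x.2%:R) ^+ 2.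

Definition sched_time (R : realType) (m : machine R) (s : seq batch) : R :=
  \sum_(x <- s) batch_time m x.

(* f_v(a,b): minimum time over all schedules for (a,b)
   (the set is finite and nonempty, so the infimum is the minimum). *)
Definition f (R : realType) (m : machine R) (a b : nat) : R :=
  inf [set sched_time m s | s in [set s | is_schedule a b s]].

Definition bset (R : realType) (m : machine R) (L : R) (a : nat) : set nat :=
  [set b | f m a b <= L].

Definition dp (R : realType) (ms : nat -> machine R) (L : R) (v a : nat)
  : set nat :=
  [set c | exists x y : nat -> nat,
      [/\ (\sum_(1 <= i < v.+1) x i)%N = a,
          (\sum_(1 <= i < v.+1) y i)%N = c
        & forall i, (1 <= i <= v)%N -> bset (ms i) L (x i) (y i)]].

From HB Require Import structures.
From mathcomp Require Import all_boot all_order all_algebra.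
From mathcomp Require Import boolp classical_sets reals.
From mathcomp Require Import zify ring lra.
Set Implicit Arguments. Unset Strict Implicit. Unset Printing Implicit Defensive.
Import Order.TTheory GRing.Theory Num.Theory.

(* A schedule of one machine is determined by the sizes of its A-batches and
   of its B-batches, two partitions whose numbers of parts differ by at most
   one, so f(a, b) <= L is a condition on such a pair of partitions.  Call
   (a, n) a core point if the a A-jobs fit in n + 1 batches separated by n
   singleton B-batches.  A feasible (a, b) that is not a core point stays
   feasible with one B-job less: shrink a B-batch of size > 1, or drop a
   B-batch if there are at least as many B-batches as A-batches.  For fixed a
   the core values n form an interval, since the cheapest split of a into k
   parts has a cost convex in k, and removing one A-job lowers each core value
   by at most one.  Both properties pass to sums over machines (by moving one
   A-job at a time from one machine to another), and then dp(v, a) is an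
   interval: going down from c3 one B-job at a time can only get stuck at a
   core value, and all values between it and a core value below c1 are core
   values. *)

Definition between (n1 n n3 : nat) := (n1 <= n <= n3) \/ (n3 <= n <= n1).

Lemma between_sym n1 n n3 : between n1 n n3 -> between n3 n n1.
Proof. by case; [right | left]. Qed.

Lemma between_split m n1 n n3 : between n1 n n3 -> between n1 n m \/ between m n n3.
Proof. rewrite /between; lia. Qed.

Definition interval_fibers (G : nat -> nat -> Prop) :=
  forall x n1 n n3, G x n1 -> G x n3 -> between n1 n n3 -> G x n.

Definition steps_down (G : nat -> nat -> Prop) :=
  forall x n, G x.+1 n -> exists2 n', G x n' & (n' <= n <= n'.+1).

Definition sumrel (G H : nat -> nat -> Prop) (x n : nat) :=
  exists x1 x2 n1 n2, [/\ x = (x1 + x2), n = (n1 + n2), G x1 n1 & H x2 n2].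

Lemma steps_down_le G x n x' :
  steps_down G -> G x n -> (x' <= x) -> exists n', G x' n'.
Proof.
move=> GS; elim: x n => [|x IHx] n Gxn.
  by rewrite leqn0 => /eqP->; exists n.
rewrite leq_eqVlt => /orP[/eqP->|lt]; first by exists n.
by have [n' Gn' _] := GS _ _ Gxn; apply: IHx Gn' lt.
Qed.

Section SumRelation.
Variables G H : nat -> nat -> Prop.
Hypotheses (GI : interval_fibers G) (GS : steps_down G).
Hypotheses (HI : interval_fibers H) (HS : steps_down H).

Lemma sumrel_fixed_split x1 x2 m1 m2 k1 k2 t :
  G x1 m1 -> G x1 k1 -> H x2 m2 -> H x2 k2 ->
  between (m1 + m2) t (k1 + k2) -> sumrel G H (x1 + x2) t.
Proof.
move=> Gm Gk Hm Hk /(between_split (k1 + m2)) [hb|hb].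
  exists x1, x2, (t - m2), m2; split => //; first by rewrite /between in hb; lia.
  by apply: (GI Gm Gk); rewrite /between in hb *; lia.
exists x1, x2, k1, (t - k1); split => //; first by rewrite /between in hb; lia.
by apply: (HI Hm Hk); rewrite /between in hb *; lia.
Qed.

(* The sumsets for the splits (p + 1, q) and (p, q + 1) overlap or touch,
   because removing one job from either side lowers its values by at most one. *)
Lemma sumrel_adjacent p q a1 a2 b1 b2 t :
  G p.+1 a1 -> H q a2 -> G p b1 -> H q.+1 b2 ->
  between (a1 + a2) t (b1 + b2) -> sumrel G H (p + q).+1 t.
Proof.
move=> Ga1 Ha2 Gb1 Hb2 hb.
have [a1' Ga1' ha1] := GS Ga1.
have [b2' Hb2' hb2] := HS Hb2.
have [h|h] : between (a1 + a2) t (a1 + b2') \/ between (a1' + b2) t (b1 + b2).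
  by rewrite /between in hb *; lia.
- by rewrite -addSn; apply: (sumrel_fixed_split Ga1 Ga1 Ha2 Hb2' h).
- by rewrite -addnS; apply: (sumrel_fixed_split Ga1' Gb1 Hb2 Hb2 h).
Qed.

Lemma sumrel_interval : interval_fibers (sumrel G H).
Proof.
move=> x n1 t n3 [x1 [x2 [m1 [m2 [-> -> Gm Hm]]]]] [y1 [y2 [k1 [k2 [exy -> Gk Hk]]]]].
move ed: (x1 - y1 + (y1 - x1)) => d.
elim: d y1 y2 k1 k2 exy Gk Hk ed t => [|d IHd] y1 y2 k1 k2 exy Gk Hk ed t hb.
  have [ey1 ey2] : y1 = x1 /\ y2 = x2 by lia.
  by rewrite ey1 ey2 in Gk Hk; apply: sumrel_fixed_split Gm Gk Hm Hk hb.
case: (ltngtP x1 y1) => [lt|lt|eq]; last by lia.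
- have [p ey1] : exists p, y1 = p.+1 by exists y1.-1; lia.
  rewrite ey1 in Gk; have [k1' Gk1' _] := GS Gk.
  have [k2' Hk2'] : exists n, H y2.+1 n by apply: (steps_down_le HS Hm); lia.
  case: (between_split (k1' + k2') hb) => h.
    by apply: (IHd p y2.+1 k1' k2') => //; lia.
  by rewrite exy ey1 addSn; apply: (sumrel_adjacent Gk Hk Gk1' Hk2' (between_sym h)).
- have [q ey2] : exists q, y2 = q.+1 by exists y2.-1; lia.
  rewrite ey2 in Hk; have [k2' Hk2' _] := HS Hk.
  have [k1' Gk1'] : exists n, G y1.+1 n by apply: (steps_down_le GS Gm); lia.
  case: (between_split (k1' + k2') hb) => h.
    by apply: (IHd y1.+1 q k1' k2') => //; lia.
  by rewrite exy ey2 addnS; apply: (sumrel_adjacent Gk1' Hk2' Gk Hk h).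
Qed.

Lemma sumrel_steps_down : steps_down (sumrel G H).
Proof.
move=> x n [[|x1] [x2 [n1 [n2 [ex -> G1 H2]]]]].
  rewrite add0n in ex; rewrite -ex in H2.
  have [n2' H2' hn] := HS H2.
  by exists (n1 + n2'); [exists 0, x, n1, n2' | lia].
have [n1' G1' hn] := GS G1.
by exists (n1' + n2); [exists x1, x2, n1', n2; split => //; lia | lia].
Qed.

End SumRelation.

Definition descends_to (B G : nat -> nat -> Prop) :=
  (forall x y, G x y -> B x y) /\
  (forall x y, B x y -> 0 < y /\ B x y.-1 \/ G x y).

Lemma descends_to_below B G x y :
  descends_to B G -> B x y -> exists2 n, n <= y & G x n.
Proof.
move=> [_ step]; elim: y => [|y IHy] Bxy.
  by case: (step _ _ Bxy) => [[]|G0] //; exists 0.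
case: (step _ _ Bxy) => [[_ /IHy [n hn Gn]]|Gy]; last by exists y.+1.
by exists n => //; apply: leqW.
Qed.

Lemma descends_to_interval B G :
  descends_to B G -> interval_fibers G -> interval_fibers B.
Proof.
move=> desc GI x n1 n n3.
wlog le13 : n1 n3 / n1 <= n3.
  move=> wl B1 B3 /between_sym hb.
  by case: (leqP n1 n3) => h; [apply: wl B1 B3 _ | apply: wl B3 B1 _] => //;
    [apply: between_sym | apply: ltnW].
move=> B1 B3 hb; have [GB step] := desc.
have [n0 le01 G0] := descends_to_below desc B1.
suff down k : B x (n + k) -> B x n.
  by apply: (down (n3 - n)); rewrite subnKC //; rewrite /between in hb; lia.
elim: k => [|k IHk]; first by rewrite addn0.
rewrite addnS => Bk; apply: IHk.
case: (step _ _ Bk) => [[_ Bk'] //|Gk]; apply/GB/(GI _ n0 _ (n + k).+1) => //.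
by rewrite /between in hb *; lia.
Qed.

Lemma sumrel_descends B1 G1 B2 G2 :
  descends_to B1 G1 -> descends_to B2 G2 ->
  descends_to (sumrel B1 B2) (sumrel G1 G2).
Proof.
move=> [GB1 st1] [GB2 st2]; split.
  move=> x y [x1 [x2 [y1 [y2 [-> -> G1y G2y]]]]].
  by exists x1, x2, y1, y2; split; [| | apply: GB1 | apply: GB2].
move=> x y [x1 [x2 [y1 [y2 [-> -> B1y B2y]]]]].
case: (st1 _ _ B1y) => [[y1p B1y']|G1y].
  by left; split; [lia | exists x1, x2, y1.-1, y2; split => //; lia].
case: (st2 _ _ B2y) => [[y2p B2y']|G2y].
  by left; split; [lia | exists x1, x2, y1, y2.-1; split => //; lia].
by right; exists x1, x2, y1, y2.
Qed.

Definition bigsumrel (P : nat -> nat -> nat -> Prop) (v a c : nat) :=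
  exists x y : nat -> nat,
    [/\ \sum_(1 <= i < v.+1) x i = a, \sum_(1 <= i < v.+1) y i = c
      & forall i, 1 <= i <= v -> P i (x i) (y i)].

Lemma bigsumrel0 P : bigsumrel P 0 = fun a c => a = 0 /\ c = 0.
Proof.
apply/funext => a; apply/funext => c; apply/propext; split.
  by move=> [x [y [<- <- _]]]; rewrite !big_geq.
move=> [-> ->]; exists (fun _ => 0), (fun _ => 0).
by split => [||i]; rewrite ?big_geq //; lia.
Qed.

Lemma bigsumrelS P v : bigsumrel P v.+1 = sumrel (bigsumrel P v) (P v.+1).
Proof.
apply/funext => a; apply/funext => c; apply/propext; split.
  move=> [x [y [<- <- Pxy]]].
  exists (\sum_(1 <= i < v.+1) x i), (x v.+1), (\sum_(1 <= i < v.+1) y i), (y v.+1).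
  split; [exact: big_nat_recr | exact: big_nat_recr | | by apply: Pxy; lia].
  by exists x, y; split => // i hi; apply: Pxy; lia.
move=> [a1 [a2 [c1 [c2 [-> -> [x [y [<- <- Pxy]]] Pv]]]]].
pose upd (z : nat -> nat) w i := if i == v.+1 then w else z i.
have sum_upd z w : \sum_(1 <= i < v.+2) upd z w i = \sum_(1 <= i < v.+1) z i + w.
  rewrite big_nat_recr //= /upd eqxx; congr (_ + _).
  by apply: eq_big_nat => i hi; rewrite ifN //; lia.
exists (upd x a2), (upd y c2); split; rewrite ?sum_upd //.
by move=> i hi; rewrite /upd; case: eqP => [->|ne] //; apply: Pxy; lia.
Qed.

Lemma bigsumrel_interval P v :
  (forall i, 1 <= i <= v -> interval_fibers (P i) /\ steps_down (P i)) ->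
  interval_fibers (bigsumrel P v) /\ steps_down (bigsumrel P v).
Proof.
elim: v => [|v IHv] hP.
  rewrite bigsumrel0; split; last by move=> x n [].
  by move=> x n1 n n3 [-> ->] [_ ->]; rewrite /between => hb; split => //; lia.
have [I1 S1] := IHv (fun i hi => hP i ltac:(lia)).
have [I2 S2] := hP v.+1 ltac:(lia).
by rewrite bigsumrelS; split; [apply: sumrel_interval | apply: sumrel_steps_down].
Qed.

Lemma bigsumrel_descends B G v :
  (forall i, 1 <= i <= v -> descends_to (B i) (G i)) ->
  descends_to (bigsumrel B v) (bigsumrel G v).
Proof.
elim: v => [|v IHv] hBG.
  by rewrite !bigsumrel0; split => // x y [-> ->]; right.
rewrite !bigsumrelS; apply: sumrel_descends; last by apply: hBG; lia.
by apply: IHv => i hi; apply: hBG; lia.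
Qed.

Definition sqsum (l : seq nat) := sumn [seq p * p | p <- l].

Notation all_pos l := (all (fun p => 0 < p) l).

Lemma size_le_sumn l : all_pos l -> size l <= sumn l.
Proof. by elim: l => //= p l IH /andP [p0 /IH]; lia. Qed.

Lemma sumn_nseq1 k : sumn (nseq k 1) = k.
Proof. by rewrite sumn_nseq mul1n. Qed.

Lemma sqsum_nseq1 k : sqsum (nseq k 1) = k.
Proof. by rewrite /sqsum map_nseq sumn_nseq1. Qed.

Lemma all_pos_nseq1 k : all_pos (nseq k 1).
Proof. by rewrite all_nseq orbT. Qed.

Lemma all_pos_unit l : all_pos l -> ~~ has (fun p => 1 < p) l -> l = nseq (size l) 1.
Proof.
elim: l => //= p l IH /andP [p0 pl] /norP [p1 hl].
by rewrite -IH //; congr (_ :: _); lia.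
Qed.

Lemma decr_part l : all_pos l -> has (fun p => 1 < p) l ->
  exists l', [/\ all_pos l', size l' = size l, sumn l = (sumn l').+1
                & sqsum l' <= sqsum l].
Proof.
rewrite /sqsum; elim: l => //= p l IH /andP [p0 pl] /orP [p1|big].
  by exists (p.-1 :: l); rewrite /= pl andbT; split => //; nia.
have [l' [pl' zl' sl' ql']] := IH pl big.
by exists (p :: l'); rewrite /= p0 pl' zl' sl'; split => //; lia.
Qed.

(* Termwise, p^2 + q(q + 1) - (2q + 1)p = (p - q)(p - q - 1) >= 0 on integers. *)
Lemma sqsum_tangent q l : q.*2.+1 * sumn l <= sqsum l + q * q.+1 * size l.
Proof.
rewrite /sqsum; elim: l => [|p l IH] /=; first by rewrite muln0.
suff : q.*2.+1 * p <= p * p + q * q.+1 by nia.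
case: (leqP p q) => h; rewrite -(subnKC h).
  by move: (q - p) => d; nia.
by move: (p - q.+1) => d; nia.
Qed.

Lemma balanced_partition x k : 0 < k <= x ->
  exists P, [/\ all_pos P, sumn P = x, size P = k &
     sqsum P + (x %/ k) * (x %/ k).+1 * k = (x %/ k).*2.+1 * x].
Proof.
move=> /andP [k0 kx]; set q := x %/ k; set r := x %% k.
have q0 : 0 < q by rewrite divn_gt0.
have rk : r < k by rewrite ltn_pmod.
have ex : x = q * k + r by rewrite /q /r -divn_eq.
exists (nseq r q.+1 ++ nseq (k - r) q); split.
- by rewrite all_cat !all_nseq q0 !orbT.
- by rewrite sumn_cat !sumn_nseq ex; nia.
- by rewrite size_cat !size_nseq; lia.
rewrite /sqsum map_cat !map_nseq sumn_cat !sumn_nseq ex.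
have ek : k = r + (k - r) by lia.
by move: (k - r) ek => s ek; clearbody q r; subst k; nia.
Qed.

Definition type_change (x y : batch) := x.1 != y.1.

Definition batchesA (s : seq batch) := [seq x.2 | x <- s & x.1].
Definition batchesB (s : seq batch) := [seq x.2 | x <- s & ~~ x.1].

Definition batch_pair (PA PB : seq nat) :=
  [&& all_pos PA, all_pos PB, size PA <= (size PB).+1 & size PB <= (size PA).+1].

Lemma path_batches_size z s : path type_change z s ->
  if z.1 then (size (batchesB (z :: s)) <= size (batchesA (z :: s))
                 <= (size (batchesB (z :: s))).+1)
  else (size (batchesA (z :: s)) <= size (batchesB (z :: s))
          <= (size (batchesA (z :: s))).+1).
Proof.
elim: s z => [|[yb yn] s IH] [zb zn] /=; first by case: zb.
move=> /andP [hzy /IH]; move: hzy; rewrite /type_change /batchesA /batchesB /=.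
by case: zb; case: yb => //= _; rewrite ?size_map /=; lia.
Qed.

Lemma sorted_batches_size s : sorted type_change s ->
  (size (batchesA s) <= (size (batchesB s)).+1) /\
  (size (batchesB s) <= (size (batchesA s)).+1).
Proof. by case: s => [|z s] //= /path_batches_size; case: (z.1); lia. Qed.

Lemma batches_of_schedule x y s : is_schedule x y s ->
  [/\ batch_pair (batchesA s) (batchesB s), sumn (batchesA s) = x & sumn (batchesB s) = y].
Proof.
case/and4P => pos alt /eqP sA /eqP sB; split => //.
have [zA zB] := sorted_batches_size alt.
rewrite /batch_pair zA zB /batchesA /batchesB !all_map !all_filter !andbT.
by apply/andP; split; apply: sub_all pos => z /= ->; rewrite implybT.
Qed.

Fixpoint weave (b : bool) (l1 l2 : seq nat) : seq batch :=
  match l1, l2 with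
  | x :: l1', y :: l2' => (b, x) :: (~~ b, y) :: weave b l1' l2'
  | x :: _, [::] => [:: (b, x)]
  | [::], _ => [::]
  end.

Lemma batches_weave b l1 l2 : size l2 <= size l1 <= (size l2).+1 ->
  batchesA (weave b l1 l2) = (if b then l1 else l2) /\
  batchesB (weave b l1 l2) = (if b then l2 else l1).
Proof.
rewrite /batchesA /batchesB.
elim: l1 l2 => [|x l1 IH] [|y l2] //=; first by case: b.
  by case: l1 {IH}; case: b.
by move=> /IH []; case: b IH => /= _ -> ->.
Qed.

Lemma weave_path b l1 l2 n : path type_change (~~ b, n) (weave b l1 l2).
Proof.
elim: l1 l2 n => [|x l1 IH] [|y l2] n //=; rewrite /type_change /=.
- by case: b {IH}.
- by rewrite IH; case: b {IH}.
Qed.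

Lemma weave_pos b l1 l2 :
  all_pos l1 -> all_pos l2 -> all (fun z : batch => 0 < z.2) (weave b l1 l2).
Proof.
elim: l1 l2 => [|x l1 IH] l2 //= /andP [x0 p1]; case: l2 => [|y l2] /=; first by rewrite x0.
by move=> /andP [y0 p2]; rewrite x0 y0 IH.
Qed.

Lemma schedule_of_batches PA PB : batch_pair PA PB ->
  exists2 s, is_schedule (sumn PA) (sumn PB) s & batchesA s = PA /\ batchesB s = PB.
Proof.
case/and4P => pA pB zA zB.
pose s := if size PB <= size PA then weave true PA PB else weave false PB PA.
have [eA eB] : batchesA s = PA /\ batchesB s = PB.
  by rewrite /s; case: leqP => h; apply: batches_weave; lia.
exists s => //; apply/and4P; split.
- by rewrite /s; case: ifP => _; apply: weave_pos.
- by rewrite /s; case: ifP => _; apply: (path_sorted (x := (_, 0))); apply: weave_path.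
- by rewrite -/(batchesA s) eA.
- by rewrite -/(batchesB s) eB.
Qed.

Lemma exists_schedule x y : exists s, is_schedule x y s.
Proof.
pose part n := [seq i <- [:: n] | 0 < i].
have sumn_part n : sumn (part n) = n by case: n => //= n; rewrite addn0.
have [|s] := @schedule_of_batches (part x) (part y).
  by rewrite /batch_pair /part; case: x; case: y.
by rewrite !sumn_part => hs _; exists s.
Qed.

Definition batches_upto N : seq batch :=
  [seq (b, i) | b <- [:: true; false], i <- iota 0 N.+1].

Fixpoint seqs_upto N k : seq (seq batch) :=
  if k is k'.+1 then [::] :: [seq z :: s | z <- batches_upto N, s <- seqs_upto N k']
  else [:: [::]].

Lemma mem_seqs_upto N k s : size s <= k -> all (fun z : batch => z.2 <= N) s ->
  s \in seqs_upto N k.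
Proof.
elim: k s => [|k IH] [|[b i] s] // hs /andP [hi hN].
have -> : seqs_upto N k.+1 =
  [::] :: [seq z :: s | z <- batches_upto N, s <- seqs_upto N k] by [].
rewrite in_cons; apply/orP; right.
apply: (allpairs_f (fun (z : batch) s => z :: s)); last exact: IH.
by apply: (allpairs_f pair); [case: (b) | rewrite mem_iota add0n ltnS].
Qed.

Lemma schedule_in_seqs_upto x y s : is_schedule x y s -> s \in seqs_upto (x + y) (x + y).
Proof.
case/and4P => pos _ /eqP sA /eqP sB.
have sumn_s : sumn [seq z.2 | z <- s] = x + y.
  by rewrite -sA -sB; elim: s {pos sA sB} => //= z s ->; case: (z.1) => /=; lia.
apply: mem_seqs_upto.
  by rewrite -sumn_s -(size_map snd); apply: size_le_sumn; rewrite all_map.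
apply/allP => z zs; rewrite -sumn_s.
elim: s zs {pos sA sB sumn_s} => //= w s IH; rewrite in_cons => /orP [/eqP <-|/IH]; lia.
Qed.

Local Open Scope ring_scope.

Lemma affine_le_between (R : realDomainType) (a b L K1 K K3 : R) :
  K1 <= K <= K3 -> K1 * a + b <= L -> K3 * a + b <= L -> K * a + b <= L.
Proof.
move=> /andP [h1 h3] c1 c3; case: (lerP 0 a) => ha.
  by apply: le_trans c3; rewrite lerD2r ler_wpM2r.
by apply: le_trans c1; rewrite lerD2r ler_wnM2r // ltW.
Qed.

Lemma exists_argmin (T : eqType) (R : realDomainType) (c : T -> R) (l : seq T) :
  l != [::] -> exists2 s0, s0 \in l & forall s, s \in l -> c s0 <= c s.
Proof.
elim: l => // z [|z' l] IH _.
  by exists z => [|s]; rewrite ?mem_seq1 // => /eqP ->.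
have [s1 s1l min1] := IH isT.
case: (lerP (c z) (c s1)) => hc.
  exists z => [|s]; first exact: mem_head.
  by rewrite in_cons => /orP [/eqP -> //|/min1]; apply: le_trans.
exists s1 => [|s]; first by rewrite in_cons s1l orbT.
by rewrite in_cons => /orP [/eqP ->|/min1 //]; apply: ltW.
Qed.

Lemma exists_min_schedule (R : realDomainType) (c : seq batch -> R) x y :
  exists2 s0, is_schedule x y s0 & forall s, is_schedule x y s -> c s0 <= c s.
Proof.
set l := [seq s <- seqs_upto (x + y) (x + y) | is_schedule x y s].
have l_in s : (s \in l) = is_schedule x y s.
  by rewrite mem_filter andb_idr // => /schedule_in_seqs_upto.
have l_nonnil : l != [::].
  by have [s hs] := exists_schedule x y; apply/eqP => l0; rewrite -l_in l0 in hs.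
have [s0] := exists_argmin c l_nonnil; rewrite l_in => hs0 min0.
by exists s0 => // s; rewrite -l_in; apply: min0.
Qed.

Section Machine.
Variables (R : realType) (m : machine R) (L : R).
Hypotheses (kA_ge0 : 0 <= kA m) (kB_ge0 : 0 <= kB m).
Hypotheses (tA_ge0 : 0 <= tA m) (tB_ge0 : 0 <= tB m).

Definition pair_cost (PA PB : seq nat) : R :=
  (size PA)%:R * tA m + kA m * (sqsum PA)%:R + (size PB)%:R * tB m + kB m * (sqsum PB)%:R.

Lemma pair_cost_le PA PA' PB PB' :
  (size PA' <= size PA)%N -> (sqsum PA' <= sqsum PA)%N ->
  (size PB' <= size PB)%N -> (sqsum PB' <= sqsum PB)%N ->
  pair_cost PA' PB' <= pair_cost PA PB.
Proof.
rewrite /pair_cost -!(ler_nat R) => hA qA hB qB.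
have := ler_wpM2r tA_ge0 hA; have := ler_wpM2l kA_ge0 qA.
have := ler_wpM2r tB_ge0 hB; have := ler_wpM2l kB_ge0 qB.
lra.
Qed.

Lemma sched_time_batches s : sched_time m s = pair_cost (batchesA s) (batchesB s).
Proof.
rewrite /sched_time /pair_cost /batchesA /batchesB /sqsum.
elim: s => [|[[] n] s IH]; first by rewrite big_nil /= !mul0r !mulr0 !addr0.
all: rewrite big_cons IH /batch_time /= -!natr1 !natrD natrM expr2; ring.
Qed.

Lemma sched_time_ge0 s : 0 <= sched_time m s.
Proof.
rewrite /sched_time; apply: sumr_ge0 => -[[] n] _ /=;
  by apply: addr_ge0 => //; apply: mulr_ge0 => //; apply: exprn_ge0.
Qed.

Lemma f_eq_min x y s0 : is_schedule x y s0 ->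
  (forall s, is_schedule x y s -> sched_time m s0 <= sched_time m s) ->
  f m x y = sched_time m s0.
Proof.
move=> hs0 min0; apply/le_anti/andP; split.
  apply: ge_inf; last by exists s0.
  by exists 0 => _ [s _ <-]; apply: sched_time_ge0.
by apply: lb_le_inf => [|_ [s hs <-]]; [exists (sched_time m s0), s0 | apply: min0].
Qed.

Definition feasible (x y : nat) := exists PA PB,
  [/\ batch_pair PA PB, sumn PA = x, sumn PB = y & pair_cost PA PB <= L].

Lemma f_le_feasible x y : f m x y <= L <-> feasible x y.
Proof.
have [s0 hs0 min0] := exists_min_schedule (sched_time m) x y.
rewrite (f_eq_min hs0 min0); split.
  have [hb sA sB] := batches_of_schedule hs0.
  by exists (batchesA s0), (batchesB s0); rewrite -sched_time_batches.
move=> [PA [PB [hb sA sB c]]]; have [s hs [eA eB]] := schedule_of_batches hb.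
rewrite sA sB in hs; apply: le_trans (min0 _ hs) _.
by rewrite sched_time_batches eA eB.
Qed.

Definition core_cost (PA : seq nat) := pair_cost PA (nseq (size PA).-1 1%N).

(* As [(size PA).-1] is truncated, the empty split makes (0, 0) a core point. *)
Definition core (x n : nat) := exists PA,
  [/\ all_pos PA, sumn PA = x, (size PA).-1 = n & core_cost PA <= L].

Lemma core_feasible x n : core x n -> feasible x n.
Proof.
move=> [PA [pA sA <- c]]; exists PA, (nseq (size PA).-1 1%N).
rewrite sumn_nseq1 /batch_pair pA all_pos_nseq1 size_nseq; split => //; lia.
Qed.

Lemma feasible_step x y : feasible x y -> (0 < y)%N /\ feasible x y.-1 \/ core x y.
Proof.
move=> [PA [PB [/and4P [pA pB zA zB] sA <- c]]].
case: (boolP (has (fun p => 1 < p)%N PB)) => [big|small].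
  have [PB' [pB' zB' -> qB']] := decr_part pB big.
  left; split => //; exists PA, PB'; split => //.
    by rewrite /batch_pair pA pB' zB' zA zB.
  by apply: le_trans c; apply: pair_cost_le => //; rewrite zB'.
have [k ePB] : exists k, PB = nseq k 1%N by exists (size PB); apply: all_pos_unit.
subst PB; rewrite size_nseq in zA zB; rewrite sumn_nseq1.
case: (eqVneq k (size PA).-1) => [ek|nek].
  by right; exists PA; split => //; rewrite /core_cost -ek.
left; split; first by lia.
exists PA, (nseq k.-1 1%N); rewrite sumn_nseq1; split => //.
  by rewrite /batch_pair pA all_pos_nseq1 size_nseq; lia.
by apply: le_trans c; apply: pair_cost_le; rewrite ?size_nseq ?sqsum_nseq1 //; lia.
Qed.

Lemma bset_descends_to_core : descends_to (bset m L) core.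
Proof.
split=> x y; rewrite /bset /= f_le_feasible; first exact: core_feasible.
by move/feasible_step => [[y0 /f_le_feasible]|]; [left | right].
Qed.

Lemma core_steps_down : steps_down core.
Proof.
move=> x n [PA [pA sA <- c]].
case: (boolP (has (fun p => 1 < p)%N PA)) => [big|small].
  have [PA' [pA' zA' sA' qA']] := decr_part pA big.
  exists (size PA).-1; last by lia.
  exists PA'; split; rewrite ?zA' //; first by move: sA; rewrite sA'; case.
  by apply: le_trans c; rewrite /core_cost zA'; apply: pair_cost_le; rewrite ?zA'.
have [k ePA] : exists k, PA = nseq k 1%N by exists (size PA); apply: all_pos_unit.
subst PA; rewrite sumn_nseq1 in sA; rewrite size_nseq.
exists k.-2; last by lia.
exists (nseq k.-1 1%N); rewrite all_pos_nseq1 sumn_nseq1 size_nseq; split => //; first lia.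
apply: le_trans c; rewrite /core_cost !size_nseq.
by apply: pair_cost_le; rewrite ?size_nseq ?sqsum_nseq1; lia.
Qed.

Lemma core_costE PA : (0 < size PA)%N ->
  core_cost PA = (size PA)%:R * (tA m + tB m + kB m) + kA m * (sqsum PA)%:R - (tB m + kB m).
Proof.
case: PA => // p PA _; rewrite /core_cost /pair_cost size_nseq sqsum_nseq1.
rewrite [size _]/= -natr1; ring.
Qed.

(* By [sqsum_tangent] with q = x %/ k, the cost of any split of x is at least
   an affine function of its number of parts, with equality for the balanced
   split into k parts. *)
Lemma core_convex x P1 P3 k :
  all_pos P1 -> all_pos P3 -> sumn P1 = x -> sumn P3 = x ->
  (0 < size P1 < k)%N -> (k < size P3)%N -> core_cost P1 <= L -> core_cost P3 <= L ->
  exists P, [/\ all_pos P, sumn P = x, size P = k & core_cost P <= L].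
Proof.
move=> p1 p3 s1 s3 /andP [z1 k1] k3 c1 c3.
have [|B [pB sB zB eB]] := @balanced_partition x k.
  by have := size_le_sumn p3; rewrite s3; lia.
exists B; split => //; set q := (x %/ k)%N in eB.
pose a := tA m + tB m + kB m - kA m * (q * q.+1)%:R.
pose b := kA m * (q.*2.+1 * x)%:R - (tB m + kB m).
have line_le P : all_pos P -> sumn P = x -> (0 < size P)%N ->
    (size P)%:R * a + b <= core_cost P.
  move=> pP sP zP; rewrite core_costE // /a /b.
  have := sqsum_tangent q P; rewrite sP -(ler_nat R) natrD !natrM.
  by move=> /(ler_wpM2l kA_ge0); lra.
have costB : core_cost B = k%:R * a + b.
  have eBR : (sqsum B)%:R = (q.*2.+1 * x)%:R - (q * q.+1)%:R * k%:R :> R.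
    by rewrite -eB natrD natrM addrK.
  by rewrite core_costE zB ?eBR /a /b; [ring | lia].
rewrite costB; apply: (@affine_le_between _ a b L (size P1)%:R _ (size P3)%:R).
- by rewrite !ler_nat; lia.
- exact: le_trans (line_le _ p1 s1 z1) c1.
- by apply: le_trans (line_le _ p3 s3 _) c3; lia.
Qed.

Lemma core_interval : interval_fibers core.
Proof.
suff core_mid x n1 n n3 : core x n1 -> core x n3 -> (n1 < n < n3)%N -> core x n.
  move=> x n1 n n3 C1 C3 hb.
  case: (eqVneq n n1) => [-> //|ne1]; case: (eqVneq n n3) => [-> //|ne3].
  by case: hb => hb; [apply: (core_mid x n1 n n3) | apply: (core_mid x n3 n n1)];
    rewrite // ?ltn_neqAle; lia.
move=> [P1 [p1 s1 <- c1]] [P3 [p3 s3 <- c3]] hn.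
have z1 : (0 < size P1)%N.
  by case: P1 p1 s1 {c1} hn => [|? ?] //= _ ex hn; have := size_le_sumn p3; lia.
have k1 : (0 < size P1 < n.+1)%N by lia.
have k3 : (n.+1 < size P3)%N by lia.
have [P [pP sP zP cP]] := core_convex p1 p3 s1 s3 k1 k3 c1 c3.
by exists P; split => //; rewrite zP.
Qed.

End Machine.

Theorem theorem3 (R : realType) (p : nat) (ms : nat -> machine R) (L : R) :
  (1 <= p)%N ->
  (forall v, (1 <= v <= p)%N ->
     [/\ 0 <= kA (ms v), 0 <= kB (ms v), 0 <= tA (ms v) & 0 <= tB (ms v)]) ->
  forall v a : nat, (1 <= v <= p)%N ->
  forall c1 c2 c3 : nat, (c1 < c2 < c3)%N ->
    dp ms L v a c1 -> dp ms L v a c3 -> dp ms L v a c2.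
Proof.
move=> _ ms_ge0 v a hv c1 c2 c3 hc.
have machine_props i : (1 <= i <= v)%N ->
    [/\ descends_to (bset (ms i) L) (core (ms i) L),
        interval_fibers (core (ms i) L) & steps_down (core (ms i) L)].
  move=> hi; have [kA0 kB0 tA0 tB0] := ms_ge0 i ltac:(lia).
  by split; [apply: bset_descends_to_core | apply: core_interval | apply: core_steps_down].
have [core_int _] : interval_fibers (bigsumrel (fun i => core (ms i) L) v) /\
                    steps_down (bigsumrel (fun i => core (ms i) L) v).
  by apply: bigsumrel_interval => i /machine_props [].
have desc : descends_to (bigsumrel (fun i => bset (ms i) L) v)
                        (bigsumrel (fun i => core (ms i) L) v).
  by apply: bigsumrel_descends => i /machine_props [].
move=> dp1 dp3; apply: (descends_to_interval desc core_int dp1 dp3).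
by rewrite /between; lia.
Qed.
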